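(* Let $\{\alpha(t)\}_{t\ge 0}$ be any non-negative, non-increasing stepsize sequence and $\eta>0$, and run the distributed regularized primal-dual algorithm described in the context. Then for every $T\in\mathbb{N}$ and every agent $i\in\{1,\dots,n\}$, \[ f(\widehat{x}_{i}(T))-f(x_{\ast})\leq \frac{1}{\sum_{t=0}^{T-1}\alpha(t)}\Bigg[\frac{1}{2}\|x_{\ast}\|^{2} +\frac{L}{n}\sum_{t=0}^{T-1}\sum_{j=1}^{n}\alpha(t)\|x_{i}(t)-x_{j}(t)\|-\frac{\eta}{2n}\sum_{t=0}^{T-1}\sum_{j=1}^{n}\alpha(t)\|\lambda_{j}(t)\|^{2} +\frac{1}{2n}\sum_{t=0}^{T-1}\sum_{j=1}^{n}\alpha^{2}(t)\Big(\|\nabla_{x}L_{j}(x_{j}(t),\lambda_{j}(t))\|^{2}+\|\nabla_{\lambda}L_{j}(x_{j}(t),\lambda_{j}(t))\|^{2}\Big)\Bigg]. \]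
   Context: Norms are Euclidean. Problem: minimize $f(x)=\frac1n\sum_{i=1}^n f_i(x)$ over $\mathcal{X}=\{x\in\mathbb{R}^d: g_k(x)\le 0,\ k=1,\dots,m\}$; write $g=(g_1,\dots,g_m)^T$. Assumptions: $\mathcal{X}$ is non-empty, convex and compact; $R$ is the smallest radius with $\mathcal{X}\subseteq \mathbb{B}_d(R)=\{x:\|x\|\le R\}$; there is a Slater vector $\tilde x$ with $g_k(\tilde x)<0$ for all $k$; all $f_i$ and $g_k$ are convex on $\mathbb{B}_d(R)$ and all their subgradients there satisfy $\|\nabla f_i(x)\|\le L$, $\|\nabla g_k(x)\|\le L$. $x_\ast$ denotes an optimal solution. Agents $1,\dots,n$ are nodes of a connected graph $G=(V,E)$; $W\in\mathbb{R}^{n\times n}$ is doubly stochastic with $W_{ij}>0$ if $(i,j)\in E$ and $W_{ij}=0$ if $(i,j)\notin E$. Regularized Lagrangian of agent $i$: $L_i(x,\lambda)=f_i(x)+\langle\lambda,g(x)\rangle-\frac{\eta}{2}\|\lambda\|^2$, with subgradients $\nabla_xL_i(x,\lambda)=\nabla f_i(x)+\sum_{k=1}^m\lambda_k\nabla g_k(x)$ and $\nabla_\lambda L_i(x,\lambda)=g(x)-\eta\lambda$ (for subgradients $\nabla f_i(x)\in\partial f_i(x)$, $\nabla g_k(x)\in\partial g_k(x)$). Algorithm: $x_i(0)=0\in\mathbb{R}^d$, $\lambda_i(0)=0\in\mathbb{R}^m$; for $t=0,1,2,\dots$: $y_i(t)=x_i(t)-\alpha(t)\nabla_xL_i(x_i(t),\lambda_i(t))$,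 $\gamma_i(t)=\lambda_i(t)+\alpha(t)\nabla_\lambda L_i(x_i(t),\lambda_i(t))$, $x_i(t+1)=\Pi_{\mathbb{B}_d(R)}(\sum_j W_{ij}y_j(t))$, $\lambda_i(t+1)=\Pi_{\mathbb{R}^m_+}(\sum_jW_{ij}\gamma_j(t))$, where $\Pi$ denotes Euclidean projection. The estimate is $\widehat{x}_i(T)=\sum_{t=0}^{T-1}\alpha(t)x_i(t)/\sum_{t=0}^{T-1}\alpha(t)$. *)

From HB Require Import structures.
From mathcomp Require Import all_boot all_order all_algebra.
From mathcomp Require Import all_classical all_reals all_analysis.
Set Implicit Arguments. Unset Strict Implicit. Unset Printing Implicit Defensive.
Import Order.TTheory GRing.Theory Num.Theory.
Import numFieldNormedType.Exports.
Local Open Scope ring_scope.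
Local Open Scope classical_set_scope.

Section Defs.
Variable R : realType.

Definition dotv (d : nat) (u v : 'rV[R]_d) : R := \sum_(k < d) u 0 k * v 0 k.
Definition enorm (d : nat) (u : 'rV[R]_d) : R := Num.sqrt (dotv u u).

Definition eball (d : nat) (r : R) : set 'rV[R]_d := [set x | enorm x <= r].

Definition orthant (m : nat) : set 'rV[R]_m := [set x | forall k, 0 <= x 0 k].

Definition convex_setE (d : nat) (C : set 'rV[R]_d) : Prop :=
  forall x y t, C x -> C y -> 0 <= t <= 1 -> C (t *: x + (1 - t) *: y).

Definition convex_fun_on (d : nat) (C : set 'rV[R]_d) (h : 'rV[R]_d -> R) : Prop :=
  forall x y t, C x -> C y -> 0 <= t <= 1 ->
    h (t *: x + (1 - t) *: y) <= t * h x + (1 - t) * h y.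

Definition subgrad (d : nat) (h : 'rV[R]_d -> R) (x v : 'rV[R]_d) : Prop :=
  forall y, h x + dotv v (y - x) <= h y.

Definition is_proj (d : nat) (C : set 'rV[R]_d) (y p : 'rV[R]_d) : Prop :=
  C p /\ forall z, C z -> enorm (p - y) <= enorm (z - y).

Definition feas (d m : nat) (g : 'I_m -> 'rV[R]_d -> R) : set 'rV[R]_d :=
  [set x | forall k, g k x <= 0].

Definition favg (d n : nat) (f : 'I_n -> 'rV[R]_d -> R) (x : 'rV[R]_d) : R :=
  n%:R^-1 * \sum_(i < n) f i x.

Definition gvec (d m : nat) (g : 'I_m -> 'rV[R]_d -> R) (x : 'rV[R]_d) : 'rV[R]_m :=
  \row_k g k x.

(* subgradients of the regularized Lagrangian L_j, given the chosen
   subgradients df j x \in \partial f_j(x), dg k x \in \partial g_k(x) *)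
Definition gradxL (d m n : nat) (df : 'I_n -> 'rV[R]_d -> 'rV[R]_d)
  (dg : 'I_m -> 'rV[R]_d -> 'rV[R]_d) (j : 'I_n) (x : 'rV[R]_d) (lam : 'rV[R]_m)
  : 'rV[R]_d := df j x + \sum_(k < m) lam 0 k *: dg k x.

Definition gradlamL (d m : nat) (g : 'I_m -> 'rV[R]_d -> R) (eta : R)
  (x : 'rV[R]_d) (lam : 'rV[R]_m) : 'rV[R]_m := gvec g x - eta *: lam.

Definition xhat (d n : nat) (alpha : nat -> R) (x : 'I_n -> nat -> 'rV[R]_d)
  (i : 'I_n) (T : nat) : 'rV[R]_d :=
  (\sum_(t < T) alpha t)^-1 *: \sum_(t < T) alpha t *: x i t.

End Defs.

From HB Require Import structures.
From mathcomp Require Import all_boot all_order all_algebra.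
From mathcomp Require Import all_classical all_reals all_analysis.
From mathcomp Require Import ring lra.
Set Implicit Arguments. Unset Strict Implicit. Unset Printing Implicit Defensive.
Import Order.TTheory GRing.Theory Num.Theory.
Import numFieldNormedType.Exports.
Local Open Scope ring_scope.
Local Open Scope classical_set_scope.

(* The iterates are compared with the pair (x*, 0) through the potential
   sum_j (|x_j(t) - x*|^2 + |lambda_j(t)|^2).  Since L_j is convex in x, x* is feasible and
   lambda_j >= 0, the subgradient step of agent j lowers it by
   2 alpha (f_j(x_j) - f_j(x* ) + eta |lambda_j|^2), up to alpha^2 |grad L_j|^2; mixing with
   the doubly stochastic W and projecting onto a convex set containing the reference point
   cannot increase it (Jensen and the obtuse-angle property of projections).  Telescoping
   bounds sum_t alpha_t sum_j (f_j(x_j(t)) - f_j(x* )); the subgradient bound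
   f_j(x_i) - f_j(x_j) <= L |x_i - x_j| moves every f_j to agent i's iterate, and convexity
   passes to the average xhat_i(T). *)

Section Euclidean.
Variables (R : realType) (d : nat).
Implicit Types (u v w : 'rV[R]_d) (a : R).

Lemma dotvC u v : dotv u v = dotv v u.
Proof. by apply: eq_bigr => k _; rewrite mulrC. Qed.

Lemma dotvDl u v w : dotv (u + v) w = dotv u w + dotv v w.
Proof. by rewrite /dotv -big_split; apply: eq_bigr => k _; rewrite !mxE mulrDl. Qed.

Lemma dotvZl a u v : dotv (a *: u) v = a * dotv u v.
Proof. by rewrite /dotv mulr_sumr; apply: eq_bigr => k _; rewrite !mxE mulrA. Qed.

Lemma dotv0l v : dotv 0 v = 0.
Proof. by rewrite -(scale0r 0) dotvZl mul0r. Qed.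

Lemma dotvNl u v : dotv (- u) v = - dotv u v.
Proof. by rewrite -scaleN1r dotvZl mulN1r. Qed.

Lemma dotvBl u v w : dotv (u - v) w = dotv u w - dotv v w.
Proof. by rewrite dotvDl dotvNl. Qed.

Lemma dotvZr a u v : dotv u (a *: v) = a * dotv u v.
Proof. by rewrite dotvC dotvZl dotvC. Qed.

Lemma dotvBr u v w : dotv u (v - w) = dotv u v - dotv u w.
Proof. by rewrite !(dotvC u) dotvBl. Qed.

Lemma dotv_suml (I : Type) (r : seq I) (P : pred I) (F : I -> 'rV[R]_d) v :
  dotv (\sum_(j <- r | P j) F j) v = \sum_(j <- r | P j) dotv (F j) v.
Proof. by apply: (big_morph (fun u => dotv u v)) => [a b|]; rewrite ?dotvDl ?dotv0l. Qed.

Lemma dotv_sumr (I : Type) (r : seq I) (P : pred I) (F : I -> 'rV[R]_d) u :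
  dotv u (\sum_(j <- r | P j) F j) = \sum_(j <- r | P j) dotv u (F j).
Proof. by rewrite dotvC dotv_suml; apply: eq_bigr => j _; rewrite dotvC. Qed.

Lemma dotvv_ge0 u : 0 <= dotv u u.
Proof. by apply: sumr_ge0 => k _; rewrite -expr2 sqr_ge0. Qed.

Lemma dotvv_eq0 u : dotv u u = 0 -> u = 0.
Proof.
move=> /psumr_eq0P u0; apply/rowP => k; rewrite mxE.
by apply/eqP; rewrite -sqrf_eq0 expr2 u0 // => l _; rewrite -expr2 sqr_ge0.
Qed.

Lemma enorm_ge0 u : 0 <= enorm u.
Proof. exact: sqrtr_ge0. Qed.

Lemma enorm_sqr u : enorm u ^+ 2 = dotv u u.
Proof. by rewrite sqr_sqrtr // dotvv_ge0. Qed.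

Lemma enorm0 : enorm (0 : 'rV[R]_d) = 0.
Proof. by rewrite /enorm dotv0l sqrtr0. Qed.

Lemma enormZ a u : enorm (a *: u) = `|a| * enorm u.
Proof. by rewrite /enorm dotvZl dotvZr mulrA -expr2 sqrtrM ?sqr_ge0 // sqrtr_sqr. Qed.

Lemma enormN u : enorm (- u) = enorm u.
Proof. by rewrite -scaleN1r enormZ normrN1 mul1r. Qed.

Lemma enormD_sqr u v : enorm (u + v) ^+ 2 = enorm u ^+ 2 + 2 * dotv u v + enorm v ^+ 2.
Proof. by rewrite !enorm_sqr dotvDl !(dotvC _ (u + v)) !dotvDl (dotvC u v); ring. Qed.

Lemma enormB_sqr u v : enorm (u - v) ^+ 2 = enorm u ^+ 2 - 2 * dotv u v + enorm v ^+ 2.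
Proof. by rewrite enormD_sqr enormN -scaleN1r dotvZr; ring. Qed.

Lemma dotv_le_enorm u v : dotv u v <= enorm u * enorm v.
Proof.
have [/eqP|u0] := eqVneq (enorm u) 0.
  by rewrite -sqrf_eq0 enorm_sqr => /eqP/dotvv_eq0->; rewrite dotv0l enorm0 mul0r.
have [/eqP|v0] := eqVneq (enorm v) 0.
  by rewrite -sqrf_eq0 enorm_sqr => /eqP/dotvv_eq0->; rewrite dotvC dotv0l enorm0 mulr0.
have uv_gt0 : 0 < enorm u * enorm v by rewrite mulr_gt0 // lt_def ?u0 ?v0 enorm_ge0.
(* 0 <= | |v| u - |u| v |^2 = 2 |u| |v| (|u| |v| - <u, v>) *)
have := sqr_ge0 (enorm (enorm v *: u - enorm u *: v)).
rewrite enormB_sqr !enormZ dotvZl dotvZr !ger0_norm ?enorm_ge0 //.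
have -> : enorm v * (enorm u * dotv u v) = enorm u * enorm v * dotv u v by ring.
rewrite (mulrC (enorm v)); move: uv_gt0.
by move: (enorm u * enorm v) (dotv u v) => P c; nra.
Qed.

Lemma enormD u v : enorm (u + v) <= enorm u + enorm v.
Proof.
rewrite -ler_sqr ?nnegrE ?addr_ge0 ?enorm_ge0 // enormD_sqr.
by have := dotv_le_enorm u v; lra.
Qed.

Lemma eball_convex r : convex_setE (@eball R d r).
Proof.
move=> u v t; rewrite /eball /= => ur vr /andP[t0 t1].
have t1' : 0 <= 1 - t by rewrite subr_ge0.
apply: le_trans (enormD _ _) _; rewrite !enormZ !ger0_norm //.
by have := ler_wpM2l t0 ur; have := ler_wpM2l t1' vr; lra.
Qed.

Lemma orthant_convex : convex_setE (@orthant R d).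
Proof.
move=> u v t u0 v0 /andP[t0 t1] k; rewrite !mxE.
by rewrite addr_ge0 // mulr_ge0 // subr_ge0.
Qed.

Lemma enorm_sqr_convex_comb (I : finType) (w : I -> R) (v : I -> 'rV[R]_d) :
  (forall j, 0 <= w j) -> \sum_j w j = 1 ->
  enorm (\sum_j w j *: v j) ^+ 2 <= \sum_j w j * enorm (v j) ^+ 2.
Proof.
move=> w_ge0 w1; set c := \sum_j w j *: v j.
have : 0 <= \sum_j w j * enorm (v j - c) ^+ 2.
  by apply: sumr_ge0 => j _; rewrite mulr_ge0 ?sqr_ge0.
have expand j : w j * enorm (v j - c) ^+ 2 =
    w j * enorm (v j) ^+ 2 - 2 * dotv (w j *: v j) c + enorm c ^+ 2 * w j.
  by rewrite enormB_sqr dotvZl; ring.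
under eq_bigr do rewrite expand.
rewrite !big_split /= sumrN -mulr_sumr -dotv_suml -mulr_sumr w1 mulr1 -/c -enorm_sqr.
lra.
Qed.

Lemma is_proj_variational (C : set 'rV[R]_d) y p z :
  convex_setE C -> is_proj C y p -> C z -> 0 <= dotv (p - y) (z - p).
Proof.
move=> convC [Cp p_min] Cz; set a := dotv (p - y) (z - p); set b := enorm (z - p) ^+ 2.
have step (s : R) : 0 < s -> s <= 1 -> 0 <= 2 * a + s * b.
  move=> s0 s1; have Cq := convC z p s Cz Cp (introT andP (conj (ltW s0) s1)).
  have := lerXn2r 2 _ _ (p_min _ Cq); rewrite !nnegrE !enorm_ge0 => /(_ isT isT).
  have -> : s *: z + (1 - s) *: p - y = (p - y) + s *: (z - p).
    by apply/rowP => k; rewrite !mxE; ring.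
  rewrite [enorm (_ + s *: _) ^+ 2]enormD_sqr dotvZr enormZ (ger0_norm (ltW s0)).
  rewrite exprMn -/a -/b => le_pq.
  by rewrite -(pmulr_rge0 _ s0); lra.
rewrite leNgt; apply/negP => a_lt0.
have b_ge0 : 0 <= b by exact: sqr_ge0.
(* for s = -a / (b - a), which lies in (0, 1], 2 a + s b = a (b - 2 a) / (b - a) < 0 *)
have ba_gt0 : 0 < b - a by lra.
have s_gt0 : 0 < - a / (b - a) by rewrite divr_gt0 // oppr_gt0.
have s_le1 : - a / (b - a) <= 1 by rewrite ler_pdivrMr // mul1r; lra.
have := step _ s_gt0 s_le1.
have -> : 2 * a + - a / (b - a) * b = a * (b - 2 * a) / (b - a).
  by field; rewrite gt_eqF.
by rewrite pmulr_lge0 ?invr_gt0 //; nra.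
Qed.

Lemma is_proj_sqr_dist_le (C : set 'rV[R]_d) y p z :
  convex_setE C -> is_proj C y p -> C z -> enorm (p - z) ^+ 2 <= enorm (y - z) ^+ 2.
Proof.
move=> convC projp Cz; have := is_proj_variational convC projp Cz.
have -> : y - z = (p - z) - (p - y) by rewrite opprB [RHS]addrC addrA subrK.
rewrite [enorm (_ - (p - y)) ^+ 2]enormB_sqr (dotvC (p - z)) !dotvBr.
by have := sqr_ge0 (enorm (p - y)); lra.
Qed.

Lemma proj_mix_sqr_dist_le n (W : 'M[R]_n) (C : set 'rV[R]_d) (y p : 'I_n -> 'rV[R]_d) z :
  (forall i j, 0 <= W i j) -> (forall i, \sum_j W i j = 1) -> (forall j, \sum_i W i j = 1) ->
  convex_setE C -> C z -> (forall i, is_proj C (\sum_j W i j *: y j) (p i)) ->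
  \sum_i enorm (p i - z) ^+ 2 <= \sum_j enorm (y j - z) ^+ 2.
Proof.
move=> W_ge0 W_row W_col convC Cz projp.
apply: (@le_trans _ _ (\sum_i \sum_j W i j * enorm (y j - z) ^+ 2)).
  apply: ler_sum => i _; apply: le_trans (is_proj_sqr_dist_le convC (projp i) Cz) _.
  have -> : \sum_j W i j *: y j - z = \sum_j W i j *: (y j - z).
    by rewrite (eq_bigr _ (fun j _ => scalerBr _ _ _)) sumrB -scaler_suml W_row scale1r.
  exact: enorm_sqr_convex_comb.
by rewrite exchange_big /=; under eq_bigr do rewrite -mulr_suml W_col mul1r.
Qed.

Lemma xhat_in_eball n r (alpha : nat -> R) (x : 'I_n -> nat -> 'rV[R]_d) i T :
  (forall t, 0 <= alpha t) -> 0 < \sum_(t < T) alpha t -> (forall t, eball r (x i t)) ->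
  eball r (xhat alpha x i T).
Proof.
move=> alpha_ge0 A_gt0 xr; set A := \sum_(t < T) alpha t.
have r_ge0 : 0 <= r := le_trans (enorm_ge0 _) (xr 0%N).
have w_ge0 (t : 'I_T) : 0 <= A^-1 * alpha t by rewrite mulr_ge0 // invr_ge0 ltW.
have w1 : \sum_(t < T) A^-1 * alpha t = 1 by rewrite -mulr_sumr mulVf // gt_eqF.
rewrite /eball /= -ler_sqr ?nnegrE ?enorm_ge0 // /xhat scaler_sumr.
under eq_bigr do rewrite scalerA.
apply: le_trans (enorm_sqr_convex_comb _ w_ge0 w1) _.
apply: (@le_trans _ _ (\sum_(t < T) A^-1 * alpha t * r ^+ 2)).
  by apply: ler_sum => t _; rewrite ler_wpM2l // lerXn2r ?nnegrE ?enorm_ge0 // xr.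
by rewrite -mulr_suml w1 mul1r.
Qed.

Lemma subgrad_sub_le (h : 'rV[R]_d -> R) y z v L :
  subgrad h y v -> enorm v <= L -> h y - h z <= L * enorm (y - z).
Proof.
move=> hv vL; have := hv z; have := dotv_le_enorm v (y - z).
have := ler_wpM2r (enorm_ge0 (y - z)) vL; rewrite !dotvBr; lra.
Qed.

Lemma subgrad_xhat_le n (h : 'rV[R]_d -> R) (alpha : nat -> R)
    (x : 'I_n -> nat -> 'rV[R]_d) i T v :
  (forall t, 0 <= alpha t) -> \sum_(t < T) alpha t != 0 ->
  subgrad h (xhat alpha x i T) v ->
  (\sum_(t < T) alpha t) * h (xhat alpha x i T) <= \sum_(t < T) alpha t * h (x i t).
Proof.
move=> alpha_ge0 A_neq0 hv; set xh := xhat alpha x i T.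
have centered : \sum_(t < T) alpha t *: (x i t - xh) = 0.
  rewrite (eq_bigr _ (fun t _ => scalerBr _ _ _)) sumrB -scaler_suml.
  by rewrite /xh /xhat scalerA mulfV // scale1r subrr.
have -> : (\sum_(t < T) alpha t) * h xh =
    \sum_(t < T) alpha t * (h xh + dotv v (x i t - xh)).
  rewrite [RHS](eq_bigr (fun t : 'I_T =>
    alpha t * h xh + dotv v (alpha t *: (x i t - xh)))) => [|t _]; last first.
    by rewrite dotvZr mulrDr.
  by rewrite big_split /= -dotv_sumr centered dotvC dotv0l addr0 mulr_suml.
by apply: ler_sum => t _; rewrite ler_wpM2l.
Qed.

End Euclidean.

Section PrimalDual.
Variables (R : realType) (d m n : nat).
Variables (f : 'I_n -> 'rV[R]_d -> R) (g : 'I_m -> 'rV[R]_d -> R).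
Variables (df : 'I_n -> 'rV[R]_d -> 'rV[R]_d) (dg : 'I_m -> 'rV[R]_d -> 'rV[R]_d).
Variables (W : 'M[R]_n) (alpha : nat -> R) (eta Rad L : R).
Variables (x : 'I_n -> nat -> 'rV[R]_d) (lam : 'I_n -> nat -> 'rV[R]_m) (z : 'rV[R]_d).

Hypothesis df_subgrad : forall j y, eball Rad y -> subgrad (f j) y (df j y).
Hypothesis dg_subgrad : forall k y, eball Rad y -> subgrad (g k) y (dg k y).
Hypothesis df_bounded : forall j y v, eball Rad y -> subgrad (f j) y v -> enorm v <= L.
Hypothesis z_feas : feas g z.
Hypothesis z_ball : eball Rad z.
Hypothesis W_ge0 : forall i j, 0 <= W i j.
Hypothesis W_row : forall i, \sum_j W i j = 1.
Hypothesis W_col : forall j, \sum_i W i j = 1.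
Hypothesis alpha_ge0 : forall t, 0 <= alpha t.
Hypothesis eta_ge0 : 0 <= eta.
Hypothesis x0 : forall j, x j 0%N = 0.
Hypothesis lam0 : forall j, lam j 0%N = 0.
Hypothesis x_step : forall i t, is_proj (eball Rad)
  (\sum_j W i j *: (x j t - alpha t *: gradxL df dg j (x j t) (lam j t))) (x i t.+1).
Hypothesis lam_step : forall i t, is_proj (@orthant R m)
  (\sum_j W i j *: (lam j t + alpha t *: gradlamL g eta (x j t) (lam j t))) (lam i t.+1).

Local Notation Gx j t := (gradxL df dg j (x j t) (lam j t)).
Local Notation Gl j t := (gradlamL g eta (x j t) (lam j t)).

Lemma lagrangian_gap_le j y (l : 'rV[R]_m) : eball Rad y -> orthant l ->
  f j y - f j z + dotv l (gvec g y) <= dotv (y - z) (gradxL df dg j y l).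
Proof.
move=> yb l_ge0; rewrite /gradxL (dotvC (y - z)) dotvDl dotv_suml.
have gk_le k : l 0 k * g k y <= dotv (l 0 k *: dg k y) (y - z).
  rewrite dotvZl ler_wpM2l //; have := dg_subgrad k yb z; have := z_feas k.
  by rewrite !dotvBr; lra.
have -> : dotv l (gvec g y) = \sum_k l 0 k * g k y by apply: eq_bigr => k _; rewrite mxE.
have := ler_sum (index_enum 'I_m) (P := xpredT) (fun k _ => gk_le k).
by have := df_subgrad j yb z; rewrite !dotvBr; lra.
Qed.

Lemma agent_step_le j y (l : 'rV[R]_m) s : eball Rad y -> orthant l -> 0 <= s ->
  enorm (y - s *: gradxL df dg j y l - z) ^+ 2 + enorm (l + s *: gradlamL g eta y l) ^+ 2
    + 2 * s * (f j y - f j z) + 2 * s * eta * enorm l ^+ 2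
  <= enorm (y - z) ^+ 2 + enorm l ^+ 2
    + s ^+ 2 * (enorm (gradxL df dg j y l) ^+ 2 + enorm (gradlamL g eta y l) ^+ 2).
Proof.
move=> yb l_ge0 s_ge0.
rewrite [y - _ - z]addrAC.
rewrite [enorm (_ - s *: _) ^+ 2]enormB_sqr [enorm (l + _) ^+ 2]enormD_sqr !enormZ.
rewrite ger0_norm // !exprMn !dotvZr [dotv l _]dotvBr dotvZr -enorm_sqr.
have := ler_wpM2l s_ge0 (lagrangian_gap_le j yb l_ge0); lra.
Qed.

Lemma iterate_in_eball j t : eball Rad (x j t).
Proof.
case: t => [|t]; last by case: (x_step j t).
by rewrite x0 /eball /= enorm0 (le_trans (enorm_ge0 z)).
Qed.

Lemma dual_iterate_nonneg j t : orthant (lam j t).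
Proof.
case: t => [|t]; last by case: (lam_step j t).
by rewrite lam0 => k; rewrite mxE.
Qed.

Let potential t := \sum_j (enorm (x j t - z) ^+ 2 + enorm (lam j t) ^+ 2).

Lemma potential_step t :
  potential t.+1 + 2 * alpha t * \sum_j (f j (x j t) - f j z)
    + 2 * alpha t * eta * \sum_j enorm (lam j t) ^+ 2
  <= potential t + alpha t ^+ 2 * \sum_j (enorm (Gx j t) ^+ 2 + enorm (Gl j t) ^+ 2).
Proof.
have x_mix := proj_mix_sqr_dist_le W_ge0 W_row W_col (@eball_convex R d Rad) z_ball
  (fun i => x_step i t).
have orthant0 : orthant (0 : 'rV[R]_m) by move=> k; rewrite mxE.
have lam_mix := proj_mix_sqr_dist_le W_ge0 W_row W_col (@orthant_convex R m) orthant0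
  (fun i => lam_step i t).
have subr0_sum (F : 'I_n -> 'rV[R]_m) :
  \sum_i enorm (F i - 0) ^+ 2 = \sum_i enorm (F i) ^+ 2 by under eq_bigr do rewrite subr0.
rewrite !subr0_sum in lam_mix.
have agents_step := ler_sum (index_enum 'I_n) (P := xpredT) (fun j _ =>
  agent_step_le j (iterate_in_eball j t) (dual_iterate_nonneg j t) (alpha_ge0 t)).
rewrite !big_split /= -!mulr_sumr !big_split /= in agents_step.
rewrite /potential !big_split /=; lra.
Qed.

Lemma potential_telescope T :
  potential T + 2 * \sum_(t < T) \sum_j alpha t * (f j (x j t) - f j z)
    + 2 * eta * \sum_(t < T) \sum_j alpha t * enorm (lam j t) ^+ 2
  <= potential 0 + \sum_(t < T) \sum_j alpha t ^+ 2 * (enorm (Gx j t) ^+ 2 + enorm (Gl j t) ^+ 2).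
Proof.
elim: T => [|T IH]; first by rewrite !big_ord0; lra.
rewrite !big_ord_recr /= -!mulr_sumr; have := potential_step T; lra.
Qed.

Lemma xhat_gap_le i T : 0 < \sum_(t < T) alpha t ->
  (\sum_(t < T) alpha t) * \sum_j (f j (xhat alpha x i T) - f j z) <=
  \sum_(t < T) \sum_j alpha t * (f j (x i t) - f j z).
Proof.
set A := \sum_(t < T) alpha t; set xh := xhat alpha x i T => A_gt0.
have xh_ball : eball Rad xh := xhat_in_eball alpha_ge0 A_gt0 (iterate_in_eball i).
rewrite mulr_sumr exchange_big /=; apply: ler_sum => j _.
have := subgrad_xhat_le alpha_ge0 (lt0r_neq0 A_gt0) (df_subgrad j xh_ball).
by rewrite mulrBr; under eq_bigr do rewrite mulrBr; rewrite sumrB -mulr_suml -/A -/xh; lra.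
Qed.

Lemma disagreement_le i T :
  \sum_(t < T) \sum_j alpha t * (f j (x i t) - f j z) <=
  \sum_(t < T) \sum_j alpha t * (f j (x j t) - f j z)
  + L * \sum_(t < T) \sum_j alpha t * enorm (x i t - x j t).
Proof.
rewrite mulr_sumr -big_split /=; apply: ler_sum => t _.
rewrite mulr_sumr -big_split /=; apply: ler_sum => j _.
have x_it := iterate_in_eball i t.
have := subgrad_sub_le (x j t) (df_subgrad j x_it) (df_bounded x_it (df_subgrad j x_it)).
by move/(ler_wpM2l (alpha_ge0 t)); lra.
Qed.

Lemma favg_xhat_gap_le i T : 0 < \sum_(t < T) alpha t ->
  (\sum_(t < T) alpha t) * (favg f (xhat alpha x i T) - favg f z) <=
  2^-1 * enorm z ^+ 2
  + L / n%:R * \sum_(t < T) \sum_(j < n) alpha t * enorm (x i t - x j t)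
  - eta / (2 * n%:R) * \sum_(t < T) \sum_(j < n) alpha t * enorm (lam j t) ^+ 2
  + (2 * n%:R)^-1 * \sum_(t < T) \sum_(j < n) alpha t ^+ 2 *
      (enorm (Gx j t) ^+ 2 + enorm (Gl j t) ^+ 2).
Proof.
move=> A_gt0; have := disagreement_le i T; have := xhat_gap_le i A_gt0.
have n_gt0 : 0 < n%:R :> R by rewrite ltr0n (leq_ltn_trans (leq0n i) (ltn_ord i)).
have potential0 : potential 0 = n%:R * enorm z ^+ 2.
  rewrite /potential (eq_bigr (fun=> enorm z ^+ 2)) => [|j _].
    by rewrite sumr_const card_ord mulr_natl.
  by rewrite x0 lam0 sub0r enormN enorm0 expr0n addr0.
have potential_ge0 : 0 <= potential T.
  by apply: sumr_ge0 => j _; rewrite addr_ge0 ?sqr_ge0.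
have Q_ge0 : 0 <= \sum_(t < T) \sum_(j < n) alpha t * enorm (lam j t) ^+ 2.
  by do 2![apply: sumr_ge0 => ? _]; rewrite mulr_ge0 ?sqr_ge0.
have := potential_telescope T; move: potential_ge0 (mulr_ge0 eta_ge0 Q_ge0).
set S1 := \sum_(t < T) \sum_(j < n) alpha t * enorm _.
set Q := \sum_(t < T) \sum_(j < n) alpha t * enorm (lam j t) ^+ 2.
set S3 := \sum_(t < T) \sum_(j < n) alpha t ^+ 2 * _.
rewrite potential0 => potential_ge0 etaQ_ge0 telescope jensen disagreement.
rewrite /favg -mulrBr -sumrB mulrCA.
have -> : 2^-1 * enorm z ^+ 2 + L / n%:R * S1 - eta / (2 * n%:R) * Q + (2 * n%:R)^-1 * S3 =
    n%:R^-1 * (n%:R / 2 * enorm z ^+ 2 + L * S1 - eta / 2 * Q + 2^-1 * S3).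
  by field; rewrite lt0r_neq0.
rewrite ler_pM2l ?invr_gt0 //; lra.
Qed.

End PrimalDual.

Theorem lemma1 (R : realType) (d m n : nat)
  (f : 'I_n -> 'rV[R]_d -> R) (g : 'I_m -> 'rV[R]_d -> R)
  (Rad L eta : R) (E : rel 'I_n) (W : 'M[R]_n)
  (df : 'I_n -> 'rV[R]_d -> 'rV[R]_d) (dg : 'I_m -> 'rV[R]_d -> 'rV[R]_d)
  (alpha : nat -> R) (x : 'I_n -> nat -> 'rV[R]_d) (lam : 'I_n -> nat -> 'rV[R]_m)
  (xstar : 'rV[R]_d)
  (* feasible set: nonempty, convex, compact *)
  (HXne : exists x0, feas g x0)
  (HXconv : convex_setE (feas g))
  (HXcpt : compact (feas g))
  (* Rad is the smallest radius with X contained in B_d(Rad) *)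
  (HRin : feas g `<=` eball Rad)
  (HRmin : forall r, feas g `<=` eball r -> Rad <= r)
  (* Slater vector *)
  (HSlater : exists xt, forall k, g k xt < 0)
  (* convexity on the ball *)
  (Hfconv : forall i, convex_fun_on (eball Rad) (f i))
  (Hgconv : forall k, convex_fun_on (eball Rad) (g k))
  (* all subgradients on the ball are bounded by L *)
  (HfL : forall i y v, eball Rad y -> subgrad (f i) y v -> enorm v <= L)
  (HgL : forall k y v, eball Rad y -> subgrad (g k) y v -> enorm v <= L)
  (* the subgradients used by the algorithm *)
  (Hdf : forall i y, eball Rad y -> subgrad (f i) y (df i y))
  (Hdg : forall k y, eball Rad y -> subgrad (g k) y (dg k y))
  (* x* is an optimal solution *)
  (Hxs : feas g xstar)
  (Hopt : forall y, feas g y -> favg f xstar <= favg f y)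
  (* connected (undirected) graph *)
  (HEsym : symmetric E)
  (HEconn : forall i j, connect E i j)
  (* W doubly stochastic, adapted to the graph *)
  (HWnn : forall i j, 0 <= W i j)
  (HWrow : forall i, \sum_(j < n) W i j = 1)
  (HWcol : forall j, \sum_(i < n) W i j = 1)
  (HWE : forall i j, E i j -> 0 < W i j)
  (HWnE : forall i j, ~~ E i j -> W i j = 0)
  (* stepsizes and regularization *)
  (Halpha0 : forall t, 0 <= alpha t)
  (Halpha_noninc : forall t, alpha t.+1 <= alpha t)
  (Heta : 0 < eta)
  (* the algorithm *)
  (Hx0 : forall i, x i 0%N = 0)
  (Hlam0 : forall i, lam i 0%N = 0)
  (Hxstep : forall i t, is_proj (eball Rad)
       (\sum_(j < n) W i j *: (x j t - alpha t *: gradxL df dg j (x j t) (lam j t)))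
       (x i t.+1))
  (Hlamstep : forall i t, is_proj (@orthant R m)
       (\sum_(j < n) W i j *: (lam j t + alpha t *: gradlamL g eta (x j t) (lam j t)))
       (lam i t.+1))
  (T : nat) (i : 'I_n)
  (* the estimate hat x_i(T) is well defined *)
  (HT : 0 < \sum_(t < T) alpha t) :
  favg f (xhat alpha x i T) - favg f xstar <=
  (\sum_(t < T) alpha t)^-1 *
  ( 2^-1 * enorm xstar ^+ 2
  + L / n%:R * \sum_(t < T) \sum_(j < n) alpha t * enorm (x i t - x j t)
  - eta / (2 * n%:R) * \sum_(t < T) \sum_(j < n) alpha t * enorm (lam j t) ^+ 2
  + (2 * n%:R)^-1 * \sum_(t < T) \sum_(j < n) alpha t ^+ 2 *
      (enorm (gradxL df dg j (x j t) (lam j t)) ^+ 2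
       + enorm (gradlamL g eta (x j t) (lam j t)) ^+ 2)).
Proof.
rewrite ler_pdivlMl //.
exact: (favg_xhat_gap_le Hdf Hdg HfL Hxs (HRin _ Hxs) HWnn HWrow HWcol Halpha0 (ltW Heta)
  Hx0 Hlam0 Hxstep Hlamstep i HT).
Qed.
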